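(* For any $a,b\in S_Z$, the vertices $a$ and $b$ are not adjacent in $\Gamma$.
   Context: All graphs are finite and simple. A graph $G$ is a minimal prime graph complement if $G$ has at least $2$ vertices and: (1) the complement $\overline{G}$ is connected; (2) $G$ is triangle-free; (3) $G$ is $3$-colorable; (4) for any two distinct nonadjacent vertices $u,v$ of $G$, adding the edge $uv$ to $G$ yields a graph that either contains a triangle or is not $3$-colorable. Standing setup: $\Gamma$ is a minimal prime graph complement with a vertex $X$ of degree $2$, whose two neighbors are $A$ and $B$. Among the vertices of $\Gamma$ other than $X,A,B$: $S_A$ is the set of those adjacent to $A$ but not $B$; $S_B$ the set of those adjacent to $B$ but not $A$; $S_Y$ the set of those adjacent to both $A$ and $B$; $S_Z$ the set of those adjacent to neither $A$ nor $B$. *)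

From mathcomp Require Import all_boot.
Set Implicit Arguments. Unset Strict Implicit. Unset Printing Implicit Defensive.

Definition simple_graph (T : finType) (e : rel T) : Prop :=
  symmetric e /\ irreflexive e.

Definition compl_rel (T : finType) (e : rel T) : rel T :=
  fun x y => (x != y) && ~~ e x y.

Definition connected_graph (T : finType) (e : rel T) : Prop :=
  forall x y : T, connect e x y.

Definition triangle_free (T : finType) (e : rel T) : Prop :=
  forall x y z : T, ~ [&& e x y, e y z & e z x].

Definition three_colorable (T : finType) (e : rel T) : Prop :=
  exists f : T -> 'I_3, forall x y : T, e x y -> f x != f y.

Definition add_edge (T : finType) (e : rel T) (u v : T) : rel T :=
  fun x y => [|| e x y, (x == u) && (y == v) | (x == v) && (y == u)].

Definition minimal_prime_graph_complement (T : finType) (e : rel T) : Prop :=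
  simple_graph e /\ (1 < #|T|)%N /\
  [/\ connected_graph (compl_rel e),
      triangle_free e,
      three_colorable e &
      forall u v : T, u != v -> ~~ e u v ->
        ~ triangle_free (add_edge e u v) \/ ~ three_colorable (add_edge e u v)].

From mathcomp Require Import all_boot.

Set Implicit Arguments.
Unset Strict Implicit.
Unset Printing Implicit Defensive.

(* Adding the edge [X c] for a vertex [c] of [S_Z] creates no triangle, since
   [X] and [c] have no common neighbour; by minimality the new graph is
   therefore not 3-colourable.  So in every 3-colouring [f] of [Gamma] the
   colours [f A], [f B], [f c] are pairwise distinct, for otherwise [X] could
   be recoloured with the missing colour and the edge [X c] added.  Hence all
   of [S_Z] receives the single colour outside [{f A, f B}], and [S_Z] is an
   independent set. *)

Lemma ord3_missing (p q r : 'I_3) :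
  ~~ [&& p != q, p != r & q != r] -> exists k : 'I_3, [&& k != p, k != q & k != r].
Proof.
case: p q r => [[|[|[|?]]] ?] // [[|[|[|?]]] ?] // [[|[|[|?]]] ?] // _;
  first [by exists ord0 | by exists (Ordinal (isT : 1 < 3)) | by exists ord_max].
Qed.

Lemma ord3_third_unique (p q a b : 'I_3) :
  [&& p != q, p != a & q != a] -> [&& p != q, p != b & q != b] -> a = b.
Proof.
by case: p q a b => [[|[|[|?]]] ?] // [[|[|[|?]]] ?] // [[|[|[|?]]] ?] //
  [[|[|[|?]]] ?] //= *; apply: val_inj.
Qed.

Section AddEdge.

Variables (T : finType) (e : rel T).
Hypotheses (e_sym : symmetric e) (e_irr : irreflexive e).

Lemma add_edge_sym u v : symmetric (add_edge e u v).
Proof. by move=> x y; rewrite /add_edge e_sym !(andbC (y == _)) (orbC ((x == u) && _)). Qed.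

Lemma add_edge_new u v x y :
  add_edge e u v x y -> ~~ e x y -> (x = u /\ y = v) \/ (x = v /\ y = u).
Proof. by case/or3P=> [-> // | /andP[/eqP-> /eqP->] | /andP[/eqP-> /eqP->]] _; [left|right]. Qed.

Lemma triangle_free_add_edge u v :
  triangle_free e -> u != v -> (forall z, e u z -> ~~ e v z) ->
  triangle_free (add_edge e u v).
Proof.
move=> tf uv no_common.
set f := add_edge e u v.
have no_common' z : f u z -> f v z -> False.
  rewrite /f /add_edge !eqxx (negbTE uv) (eq_sym v u) (negbTE uv) /= !orbF.
  case/orP=> [euz | /eqP->]; case/orP=> [evz | /eqP zu].
  - by move: (no_common z euz); rewrite evz.
  - by move: euz; rewrite zu e_irr.
  - by move: evz; rewrite e_irr.
  - by move: uv; rewrite zu eqxx.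
have old_edge x y z : [&& f x y, f y z & f z x] -> e x y.
  case/and3P=> fxy fyz fzx; apply: contraT => /(add_edge_new fxy).
  case=> -[xu yv]; subst x y; rewrite [f z _]add_edge_sym in fzx.
  - by case: (no_common' z fzx fyz).
  - by case: (no_common' z fyz fzx).
move=> x y z /and3P[fxy fyz fzx]; apply: (tf x y z).
by rewrite (old_edge x y z) ?(old_edge y z x) ?(old_edge z x y) ?fxy ?fyz ?fzx.
Qed.

Lemma three_colorable_add_edge_recolor (f : T -> 'I_3) (x c : T) (k : 'I_3) :
  (forall y z, e y z -> f y != f z) -> (forall w, e x w -> f w != k) ->
  c != x -> f c != k -> three_colorable (add_edge e x c).
Proof.
move=> f_proper x_nbr cx fck.
pose g y := if y == x then k else f y.
have g_proper_at_x y : y != x -> (e x y || (y == c)) -> g x != g y.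
  move=> yx; rewrite /g eqxx (negbTE yx) (eq_sym k).
  by case/orP=> [/x_nbr | /eqP->].
exists g => y z /or3P[eyz | /andP[/eqP-> /eqP->] | /andP[/eqP-> /eqP->]].
- case: (eqVneq y x) eyz => [-> exz | yx eyz].
    apply: g_proper_at_x; last by rewrite exz.
    by apply: contraTneq exz => ->; rewrite e_irr.
  case: (eqVneq z x) eyz => [-> eyx | zx eyz]; last by rewrite /g (negbTE yx) (negbTE zx) f_proper.
  by rewrite eq_sym; apply: g_proper_at_x; rewrite // e_sym eyx.
- by apply: g_proper_at_x; rewrite ?eqxx ?orbT.
- by rewrite eq_sym; apply: g_proper_at_x; rewrite ?eqxx ?orbT.
Qed.

End AddEdge.

Lemma S_Z_third_colour (T : finType) (e : rel T) (X A B c : T) (f : T -> 'I_3) :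
  minimal_prime_graph_complement e ->
  (forall w, e X w -> w = A \/ w = B) ->
  (forall y z, e y z -> f y != f z) ->
  [/\ c != X, c != A, c != B, ~~ e c A & ~~ e c B] ->
  [&& f A != f B, f A != f c & f B != f c].
Proof.
move=> [[e_sym e_irr] [_ [_ tf _ minimal]]] NX f_proper [cX cA cB ncA ncB].
apply/negPn/negP => /ord3_missing[k /and3P[kA kB kc]].
have Xc : X != c by rewrite eq_sym.
have nXc : ~~ e X c by apply/negP => /NX[] ceq; [move: cA | move: cB]; rewrite ceq eqxx.
case: (minimal X c Xc nXc); apply.
- by apply: triangle_free_add_edge => // z /NX[] ->.
- apply: (three_colorable_add_edge_recolor e_sym e_irr (k := k) f_proper) => //.
    by move=> w /NX[] ->; rewrite eq_sym.
  by rewrite eq_sym.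
Qed.

Theorem lemma7 (T : finType) (e : rel T) (X A B : T) :
  minimal_prime_graph_complement e ->
  A != B ->
  e X A -> e X B ->
  (forall w : T, e X w -> w = A \/ w = B) ->
  forall a b : T,
    [/\ a != X, a != A, a != B, ~~ e a A & ~~ e a B] ->
    [/\ b != X, b != A, b != B, ~~ e b A & ~~ e b B] ->
    ~~ e a b.
Proof.
move=> Gmin _ _ _ NX a b Sa Sb.
have [_ [_ [_ _ [f f_proper] _]]] := Gmin.
have fab : f a = f b := ord3_third_unique (S_Z_third_colour Gmin NX f_proper Sa)
                                         (S_Z_third_colour Gmin NX f_proper Sb).
by apply/negP => /f_proper; rewrite fab eqxx.
Qed.
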